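(* (a) For all flow graphs $h_1,h_2$ over a flow monoid with $h_1.X=h_2.X$ and $h_1.\mathit{in}=h_2.\mathit{in}$: $\mathrm{FP}(h_1,h_2)\neq\emptyset$ if and only if $h_1.X\in\mathrm{FP}(h_1,h_2)$. (b) Flow footprints are not closed under intersection and need not have a unique inclusion-minimal element: there exist such flow graphs $h_1,h_2$ and sets $Y_1,Y_2\in\mathrm{FP}(h_1,h_2)$ with $Y_1\cap Y_2\notin\mathrm{FP}(h_1,h_2)$.
   Context: A flow monoid is a commutative monoid $(\mathbb{M},+,0)$ such that $n\le m :\iff \exists o.\ m=n+o$ is a partial order in which every ascending chain $K$ has a least upper bound $\bigsqcup K$, and $n+\bigsqcup K=\bigsqcup(n+K)$. $\mathcal{C}(\mathbb{M}\to\mathbb{M})$ is the set of functions commuting with least upper bounds of ascending chains. Infinite sums denote least upper bounds of finite partial sums. A flow graph is $h=(X,E,\mathit{in})$ with $X\subseteq\mathbb{N}$ finite, $E:X\times\mathbb{N}\to\mathcal{C}(\mathbb{M}\to\mathbb{M})$, $\mathit{in}:(\mathbb{N}\setminus X)\times X\to\mathbb{M}$; $\mathit{in}_x=\sum_{y\in\mathbb{N}\setminus X}\mathit{in}(y,x)$; the flow $h.\mathit{flow}$ is the least $\mathit{flow}:X\to\mathbb{M}$ with $\mathit{flow}(x)=\mathit{in}_x+\sum_{y\in X}E(y,x)(\mathit{flow}(y))$; the outflow is $h.\mathit{out}(x,y)=E(x,y)(h.\mathit{flow}(x))$ for $x\in X$, $y\notin X$. Transfer function: $\mathsf{tf}(h)(\mathit{in}')$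 is the outflow of $(X,E,\mathit{in}')$. $\mathsf{tf}(h_1)=_{\mathit{in}}\mathsf{tf}(h_2)$ means equality on all inflows $\mathit{in}'\le\mathit{in}$ (pointwise). Contextual equivalence $h_1\approx h_2$: $h_1.X=h_2.X$, $h_1.\mathit{in}=h_2.\mathit{in}$, $\mathsf{tf}(h_1)=_{h_1.\mathit{in}}\mathsf{tf}(h_2)$. Restriction: for $Y\subseteq\mathbb{N}$, $h|_Y=(X\cap Y,\ E|_{(X\cap Y)\times\mathbb{N}},\ \mathit{in}')$ with $\mathit{in}'(z,y)=\mathit{in}(z,y)$ for $z\notin X$, $y\in X\cap Y$, and $\mathit{in}'(x,y)=E(x,y)(h.\mathit{flow}(x))$ for $x\in X\setminus Y$, $y\in X\cap Y$. Footprints: for $h_1,h_2$ with $X=h_1.X=h_2.X$ and $h_1.\mathit{in}=h_2.\mathit{in}$, $\mathrm{FP}(h_1,h_2)$ is the set of $Y\subseteq X$ such that $h_1|_Y\approx h_2|_Y$ and $h_1|_{X\setminus Y}=h_2|_{X\setminus Y}$. *)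

From Stdlib Require Import ClassicalEpsilon.
From mathcomp Require Import all_boot.
From mathcomp Require Import finmap.
Set Implicit Arguments. Unset Strict Implicit. Unset Printing Implicit Defensive.
Local Open Scope fset_scope.

Definition mle {T : Type} (add : T -> T -> T) (n m : T) : Prop :=
  exists o, m = add n o.

Definition is_chain {T : Type} (add : T -> T -> T) (K : T -> Prop) : Prop :=
  (exists k, K k) /\ (forall a b, K a -> K b -> mle add a b \/ mle add b a).

Definition is_lub {T : Type} (add : T -> T -> T) (K : T -> Prop) (l : T) : Prop :=
  (forall k, K k -> mle add k l) /\
  (forall u, (forall k, K k -> mle add k u) -> mle add l u).

Definition img {T U : Type} (f : T -> U) (K : T -> Prop) : U -> Prop :=
  fun y => exists x, K x /\ y = f x.

Record flow_monoid := FlowMonoid {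
  fm_car :> Type;
  fm_add : fm_car -> fm_car -> fm_car;
  fm_zero : fm_car;
  fm_addA : forall a b c, fm_add a (fm_add b c) = fm_add (fm_add a b) c;
  fm_addC : forall a b, fm_add a b = fm_add b a;
  fm_add0 : forall a, fm_add fm_zero a = a;
  (* mle is a partial order (reflexivity/transitivity are automatic) *)
  fm_le_antisym : forall a b, mle fm_add a b -> mle fm_add b a -> a = b;
  fm_chain_lub : forall K, is_chain fm_add K -> exists l, is_lub fm_add K l;
  fm_add_lub : forall n K l, is_chain fm_add K -> is_lub fm_add K l ->
                 is_lub fm_add (img (fm_add n) K) (fm_add n l)
}.

Section FlowDefs.
Variable M : flow_monoid.

Definition madd : M -> M -> M := @fm_add M.
Definition mzero : M := @fm_zero M.
Definition le (a b : M) : Prop := mle madd a b.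

Definition chain_continuous (f : M -> M) : Prop :=
  forall K l, is_chain madd K -> is_lub madd K l -> is_lub madd (img f K) (f l).

Definition fsum (s : seq nat) (f : nat -> M) : M :=
  foldr (fun y acc => madd (f y) acc) mzero s.

Definition isum (P : pred nat) (f : nat -> M) : M :=
  epsilon (inhabits mzero)
    (fun l => is_lub madd (fun s => exists n, s = fsum [seq y <- iota 0 n | P y] f) l).

(* E and inf are total functions; only E on X x N and inf on (N\X) x X matter. *)
Record flow_graph := FlowGraph {
  fg_X : {fset nat};
  fg_E : nat -> nat -> M -> M;
  fg_in : nat -> nat -> M
}.

(* E : X x N -> C(M -> M) *)
Definition wf (h : flow_graph) : Prop :=
  forall x y, x \in fg_X h -> chain_continuous (fg_E h x y).

Definition inflow (h : flow_graph) (x : nat) : M :=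
  isum (fun y => y \notin fg_X h) (fun y => fg_in h y x).

Definition is_flow (h : flow_graph) (f : nat -> M) : Prop :=
  forall x, x \in fg_X h ->
    f x = madd (inflow h x) (fsum (enum_fset (fg_X h)) (fun y => fg_E h y x (f y))).

Definition is_least_flow (h : flow_graph) (f : nat -> M) : Prop :=
  is_flow h f /\
  forall g, is_flow h g -> forall x, x \in fg_X h -> le (f x) (g x).

(* h.flow : the least solution (only its values on X are meaningful) *)
Definition flow (h : flow_graph) : nat -> M :=
  epsilon (inhabits (fun _ => mzero)) (is_least_flow h).

Definition outflow (h : flow_graph) (x y : nat) : M := fg_E h x y (flow h x).

Definition tf (h : flow_graph) (inf' : nat -> nat -> M) : nat -> nat -> M :=
  outflow (FlowGraph (fg_X h) (fg_E h) inf').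

Definition in_eq (X : {fset nat}) (i1 i2 : nat -> nat -> M) : Prop :=
  forall y x, y \notin X -> x \in X -> i1 y x = i2 y x.

Definition tf_eq_on (X : {fset nat}) (inf : nat -> nat -> M) (h1 h2 : flow_graph) : Prop :=
  forall inf' : nat -> nat -> M,
    (forall y x, y \notin X -> x \in X -> le (inf' y x) (inf y x)) ->
    forall x y, x \in X -> y \notin X -> tf h1 inf' x y = tf h2 inf' x y.

Definition ctx_equiv (h1 h2 : flow_graph) : Prop :=
  fg_X h1 = fg_X h2 /\ in_eq (fg_X h1) (fg_in h1) (fg_in h2) /\
  tf_eq_on (fg_X h1) (fg_in h1) h1 h2.

Definition fg_eq (h1 h2 : flow_graph) : Prop :=
  fg_X h1 = fg_X h2 /\
  (forall x y, x \in fg_X h1 -> fg_E h1 x y = fg_E h2 x y) /\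
  in_eq (fg_X h1) (fg_in h1) (fg_in h2).

Definition restrict (h : flow_graph) (Y : {fset nat}) : flow_graph :=
  FlowGraph (fg_X h `&` Y) (fg_E h)
    (fun z y => if z \in fg_X h then fg_E h z y (flow h z) else fg_in h z y).

Definition FP (h1 h2 : flow_graph) (Y : {fset nat}) : Prop :=
  Y `<=` fg_X h1 /\
  ctx_equiv (restrict h1 Y) (restrict h2 Y) /\
  fg_eq (restrict h1 (fg_X h1 `\` Y)) (restrict h2 (fg_X h1 `\` Y)).

End FlowDefs.

(* The flow of a graph is the least solution of the flow equation; it is built by
   Kleene iteration of one step of that equation, which yields Park induction:
   the flow lies below every pre-fixpoint.  Two facts about restrictions follow:
   a step of h equals a step of h|_Y fed with the same values, and the flow of
   h|_Y is the flow of h on Y.  The key replacement lemma: if the edges of two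
   graphs agree outside Y and their restrictions to Y have the same outflow at
   the inflow that the whole graph feeds into Y, then gluing the flow of one
   restriction to the flow of the other graph outside Y is a flow, so the least
   flows agree outside Y and the outflows agree.  Applied to every inflow below
   h.in this is the contextual equivalence h1 ~ h2, i.e. X is a footprint.

   (b) The counterexample lives in the monoid of subsets of {a, b, c} under
   union, a flow monoid because it is finite.  Node 0 feeds a into node 2, which
   forwards it to nodes 1 and 3; these answer b and c.  On the edge 2 -> 4, h1
   emits a upon b and c while h2 needs a, b and c.  Both {1, 2} and {3, 2} are
   footprints, as inside them b (resp. c) only reaches node 2 together with a;
   on their intersection {2} the inflow b + c is admissible and h1, h2 differ. *)

From HB Require Import structures.
From Stdlib Require Import ClassicalEpsilon.
From mathcomp Require Import all_boot finmap.
Set Implicit Arguments. Unset Strict Implicit. Unset Printing Implicit Defensive.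
Local Open Scope fset_scope.

Section FlowMonoidTheory.
Variable M : flow_monoid.
Local Notation add := (@madd M).
Local Notation zero := (mzero M).

Lemma maddA : associative add. Proof. exact: fm_addA. Qed.
Lemma maddC : commutative add. Proof. exact: fm_addC. Qed.
Lemma add0m : left_id zero add. Proof. exact: fm_add0. Qed.
Lemma addm0 : right_id zero add. Proof. by move=> a; rewrite maddC add0m. Qed.

HB.instance Definition _ := Monoid.isComLaw.Build (fm_car M) zero add maddA maddC add0m.

Lemma fsumE (s : seq nat) (f : nat -> M) : fsum s f = \big[add/zero]_(y <- s) f y.
Proof. by elim: s => [|x s IH]; rewrite ?big_nil ?big_cons //= IH. Qed.

Lemma le_refl (a : M) : le a a. Proof. by exists zero; rewrite addm0. Qed.

Lemma le_trans (a b c : M) : le a b -> le b c -> le a c.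
Proof. by move=> [o ->] [o' ->]; exists (add o o'); rewrite maddA. Qed.

Lemma le_antisym (a b : M) : le a b -> le b a -> a = b.
Proof. exact: fm_le_antisym. Qed.

Lemma le0 (a : M) : le zero a. Proof. by exists a; rewrite add0m. Qed.

Lemma le_addr (a b : M) : le a (add a b). Proof. by exists b. Qed.

Lemma le_add (a b c d : M) : le a b -> le c d -> le (add a c) (add b d).
Proof.
move=> [o ->] [o' ->]; exists (add o o').
by rewrite -!maddA; congr add; rewrite [add o _]maddC -maddA [add o' o]maddC.
Qed.

Lemma lub_unique (K : M -> Prop) (l l' : M) : is_lub add K l -> is_lub add K l' -> l = l'.
Proof. by move=> [H1 H2] [H1' H2']; apply: le_antisym; [apply: H2 | apply: H2']. Qed.

Definition seq_range (a : nat -> M) : M -> Prop := fun v => exists n, v = a n.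
Definition seq_lub (a : nat -> M) (l : M) : Prop := is_lub add (seq_range a) l.
Definition nondecr (a : nat -> M) : Prop := forall n, le (a n) (a n.+1).

Lemma nondecr_le (a : nat -> M) n m : nondecr a -> n <= m -> le (a n) (a m).
Proof.
move=> Ha; elim: m => [|m IH]; first by rewrite leqn0 => /eqP ->; exact: le_refl.
rewrite leq_eqVlt => /orP [/eqP -> | Hlt]; first exact: le_refl.
exact: le_trans (IH Hlt) (Ha m).
Qed.

Lemma nondecr_chain (a : nat -> M) : nondecr a -> is_chain add (seq_range a).
Proof.
move=> Ha; split; first by exists (a 0), 0.
move=> _ _ [n ->] [m ->]; case: (leqP n m) => H; first by left; apply: nondecr_le.
by right; apply: nondecr_le => //; apply: ltnW.
Qed.

Lemma seq_lub_ex (a : nat -> M) : nondecr a -> exists l, seq_lub a l.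
Proof. by move=> /nondecr_chain /fm_chain_lub. Qed.

Lemma seq_lub_ub (a : nat -> M) l n : seq_lub a l -> le (a n) l.
Proof. by move=> [H _]; apply: H; exists n. Qed.

Lemma seq_lub_least (a : nat -> M) l u : seq_lub a l -> (forall n, le (a n) u) -> le l u.
Proof. by move=> [_ H] Hu; apply: H => _ [n ->]; apply: Hu. Qed.

Lemma seq_lubI (a : nat -> M) l : (forall n, le (a n) l) ->
  (forall u, (forall n, le (a n) u) -> le l u) -> seq_lub a l.
Proof.
move=> H1 H2; split; first by move=> _ [n ->]; apply: H1.
by move=> v Hv; apply: H2 => n; apply: Hv; exists n.
Qed.

Lemma seq_lub_ext (a a' : nat -> M) l : a =1 a' -> seq_lub a l -> seq_lub a' l.
Proof.
move=> He Hl; apply: seq_lubI; first by move=> n; rewrite -He; apply: seq_lub_ub Hl.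
by move=> u Hu; apply: (seq_lub_least Hl) => n; rewrite He.
Qed.

Lemma seq_lub_addl (c : M) (a : nat -> M) l : nondecr a -> seq_lub a l ->
  seq_lub (fun n => add c (a n)) (add c l).
Proof.
move=> Ha Hl; have [H1 H2] := fm_add_lub c (nondecr_chain Ha) Hl.
apply: seq_lubI; first by move=> n; apply: H1; exists (a n); split => //; exists n.
by move=> u Hu; apply: H2 => _ [_ [[n ->] ->]]; apply: Hu.
Qed.

Lemma seq_lub_add (a b : nat -> M) A B : nondecr a -> nondecr b ->
  seq_lub a A -> seq_lub b B -> seq_lub (fun n => add (a n) (b n)) (add A B).
Proof.
move=> Ha Hb HA HB; apply: seq_lubI.
  by move=> n; apply: le_add; [apply: seq_lub_ub HA | apply: seq_lub_ub HB].
move=> u Hu.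
have HaB m : le (add (a m) B) u.
  apply: seq_lub_least (seq_lub_addl (a m) Hb HB) _ => n.
  apply: le_trans (Hu (maxn m n)).
  by apply: le_add; apply: nondecr_le; rewrite ?leq_maxl ?leq_maxr.
rewrite maddC; apply: seq_lub_least (seq_lub_addl B Ha HA) _ => m.
by rewrite maddC; apply: HaB.
Qed.

Lemma seq_lub_eventually (a : nat -> M) c N : nondecr a ->
  (forall n, N <= n -> a n = c) -> seq_lub a c.
Proof.
move=> Ha Hc; apply: seq_lubI; last by move=> u Hu; rewrite -(Hc N).
move=> n; rewrite -(Hc (maxn n N)) ?leq_maxr //; apply: nondecr_le => //; exact: leq_maxl.
Qed.

Lemma seq_lub_shift (a : nat -> M) l : nondecr a -> seq_lub a l -> seq_lub (fun n => a n.+1) l.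
Proof.
move=> Ha Hl; apply: seq_lubI; first by move=> n; apply: seq_lub_ub Hl.
move=> u Hu; apply: (seq_lub_least Hl) => n; apply: le_trans (Hu n); exact: Ha.
Qed.

Lemma cont_mono (f : M -> M) (x y : M) : chain_continuous f -> le x y -> le (f x) (f y).
Proof.
move=> Hf Hxy; pose K v := v = x \/ v = y.
have HK : is_chain add K.
  split; first by exists x; left.
  by move=> u v [->|->] [->|->]; [left; exact: le_refl | left | right | left; exact: le_refl].
have Hy : is_lub add K y.
  by split; [move=> k [->|->] //; exact: le_refl | move=> u Hu; apply: Hu; right].
by have [H _] := Hf _ _ HK Hy; apply: H; exists x; split => //; left.
Qed.

Lemma seq_lub_cont (f : M -> M) (a : nat -> M) l : chain_continuous f -> nondecr a ->
  seq_lub a l -> seq_lub (fun n => f (a n)) (f l).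
Proof.
move=> Hf Ha Hl; have [H1 H2] := Hf _ _ (nondecr_chain Ha) Hl.
apply: seq_lubI; first by move=> n; apply: H1; exists (a n); split => //; exists n.
by move=> u Hu; apply: H2 => _ [_ [[n ->] ->]]; apply: Hu.
Qed.

Lemma le_big (s : seq nat) (P : pred nat) (F G : nat -> M) :
  (forall z, P z -> le (F z) (G z)) ->
  le (\big[add/zero]_(z <- s | P z) F z) (\big[add/zero]_(z <- s | P z) G z).
Proof.
move=> H; elim/big_rec2: _ => [|z y1 y2 Pz Hy]; first exact: le_refl.
by apply: le_add => //; apply: H.
Qed.

Lemma big_seq_lub (s : seq nat) (a : nat -> nat -> M) (l : nat -> M) :
  (forall z, z \in s -> nondecr (a z) /\ seq_lub (a z) (l z)) ->
  nondecr (fun n => \big[add/zero]_(z <- s) a z n) /\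
  seq_lub (fun n => \big[add/zero]_(z <- s) a z n) (\big[add/zero]_(z <- s) l z).
Proof.
elim: s => [|z s IH] H.
  split; first by move=> n; rewrite !big_nil; exact: le_refl.
  rewrite big_nil; apply: (@seq_lub_eventually _ _ 0) => [n|n _]; rewrite !big_nil //.
  exact: le_refl.
have [Haz Hlz] := H z (mem_head _ _).
have [Has Hls] := IH (fun w Hw => H w (@mem_behead _ (z :: s) w Hw)).
split; first by move=> n; rewrite !big_cons; apply: le_add; [apply: Haz | apply: Has].
rewrite big_cons; apply: (@seq_lub_ext (fun n => add (a z n) (\big[add/zero]_(w <- s) a w n))).
  by move=> n; rewrite big_cons.
exact: seq_lub_add.
Qed.

Definition psum (P : pred nat) (f : nat -> M) (n : nat) : M :=
  \big[add/zero]_(0 <= y < n | P y) f y.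

Lemma psum_nondecr (P : pred nat) (f : nat -> M) : nondecr (psum P f).
Proof.
move=> n; rewrite /psum big_mkcond [X in le _ X]big_mkcond big_nat_recr //=; exact: le_addr.
Qed.

Lemma is_lub_ext (K K' : M -> Prop) l : (forall v, K v <-> K' v) ->
  is_lub add K l -> is_lub add K' l.
Proof.
move=> He [H1 H2]; split; first by move=> k /He; apply: H1.
by move=> u Hu; apply: H2 => k /He; apply: Hu.
Qed.

Lemma isum_spec (P : pred nat) (f : nat -> M) : seq_lub (psum P f) (isum P f).
Proof.
have same_range v :
    (exists n, v = fsum [seq y <- iota 0 n | P y] f) <-> seq_range (psum P f) v.
  by split => -[n ->]; exists n; rewrite fsumE big_filter /psum /index_iota subn0.
have [l Hl] := seq_lub_ex (psum_nondecr P f).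
have Hl' : is_lub add (fun v => exists n, v = fsum [seq y <- iota 0 n | P y] f) l.
  by apply: is_lub_ext Hl => v; rewrite same_range.
by apply: is_lub_ext (epsilon_spec (inhabits zero) _ (ex_intro _ l Hl')) => v; rewrite same_range.
Qed.

Lemma isum_ge (P : pred nat) (f : nat -> M) z : P z -> le (f z) (isum P f).
Proof.
move=> Pz; apply: le_trans (seq_lub_ub z.+1 (isum_spec P f)).
rewrite /psum big_mkcond big_nat_recr //= Pz maddC; exact: le_addr.
Qed.

Lemma isum_mono (P : pred nat) (f g : nat -> M) :
  (forall z, P z -> le (f z) (g z)) -> le (isum P f) (isum P g).
Proof.
move=> H; apply: (seq_lub_least (isum_spec P f)) => n.
by apply: le_trans (seq_lub_ub n (isum_spec P g)); apply: le_big.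
Qed.

Lemma isum_ext (P : pred nat) (f g : nat -> M) :
  (forall z, P z -> f z = g z) -> isum P f = isum P g.
Proof. by move=> H; apply: le_antisym; apply: isum_mono => z Pz; rewrite H //; exact: le_refl. Qed.

Lemma isum_le_idem (P : pred nat) (f : nat -> M) (u : M) :
  (forall a : M, add a a = a) -> (forall z, P z -> le (f z) u) -> le (isum P f) u.
Proof.
move=> idem Hf; apply: (seq_lub_least (isum_spec P f)) => n.
rewrite /psum; elim/big_rec: _ => [|z s Pz [o Ho]]; first exact: le0.
have [o' Ho'] := Hf z Pz; exists (add o o').
by rewrite maddA -[u]idem {1}Ho' Ho -!maddA; congr add; rewrite maddC -maddA.
Qed.

Lemma fset_big_split (X Y : {fset nat}) (k : nat -> M) : Y `<=` X ->
  \big[add/zero]_(z <- enum_fset X) k z =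
  add (\big[add/zero]_(z <- enum_fset Y) k z) (\big[add/zero]_(z <- enum_fset (X `\` Y)) k z).
Proof.
move=> /fsubsetP HYX; rewrite -big_cat; apply/perm_big/uniq_perm; first exact: fset_uniq.
  rewrite cat_uniq !fset_uniq /= andbT; apply/hasPn => z.
  by rewrite in_fsetD => /andP [] /negbTE ->.
move=> z; rewrite mem_cat in_fsetD.
by case Hz: (z \in Y) => //=; rewrite (HYX z Hz).
Qed.

Lemma psum_fset (D : {fset nat}) (k : nat -> M) n : \max_(z <- enum_fset D) z.+1 <= n ->
  psum (fun z => z \in D) k n = \big[add/zero]_(z <- enum_fset D) k z.
Proof.
move=> Hn; rewrite /psum -big_filter; apply/perm_big/uniq_perm.
- by rewrite filter_uniq // iota_uniq.
- exact: fset_uniq.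
move=> z; rewrite mem_filter mem_iota /= add0n subn0.
case HzD: (z \in D) => //=; apply: leq_trans Hn.
exact: (@leq_bigmax_seq nat (enum_fset D) xpredT (fun z => z.+1) z HzD isT).
Qed.

Lemma isum_split (X Y : {fset nat}) (i k : nat -> M) : Y `<=` X ->
  isum (fun z => z \notin Y) (fun z => if z \in X then k z else i z) =
  add (isum (fun z => z \notin X) i) (\big[add/zero]_(z <- enum_fset (X `\` Y)) k z).
Proof.
move=> HYX.
have Hpsum n : psum (fun z => z \notin Y) (fun z => if z \in X then k z else i z) n =
    add (psum (fun z => z \notin X) i n) (psum (fun z => z \in X `\` Y) k n).
  rewrite /psum (bigID (fun z => z \in X)) /= maddC; congr add.
    apply: eq_big => z; last by move=> /andP [_ /negbTE ->].
    case HzX: (z \in X); first by rewrite andbF.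
    by rewrite andbT; apply: contraFN HzX => /(fsubsetP HYX).
  by apply: eq_big => [z|z /andP [_ ->]]; rewrite ?in_fsetD.
apply: lub_unique (isum_spec _ _) _; apply: (seq_lub_ext (fun n => esym (Hpsum n))).
apply: seq_lub_add; [exact: psum_nondecr | exact: psum_nondecr | exact: isum_spec |].
exact: seq_lub_eventually (psum_nondecr _ _) (fun n Hn => psum_fset k Hn).
Qed.

Lemma big_fset_seq (D : {fset nat}) (r : seq nat) (F : nat -> M) : uniq r -> D =i r ->
  \big[add/zero]_(z <- enum_fset D) F z = \big[add/zero]_(z <- r) F z.
Proof. by move=> Hr HD; apply/perm_big/uniq_perm. Qed.

End FlowMonoidTheory.

Section LeastFlows.
Variable M : flow_monoid.
Local Notation add := (@madd M).
Local Notation zero := (mzero M).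

Definition flow_step (G : flow_graph M) (f : nat -> M) (x : nat) : M :=
  add (inflow G x) (\big[add/zero]_(y <- enum_fset (fg_X G)) fg_E G y x (f y)).

Lemma is_flowE (G : flow_graph M) f :
  is_flow G f <-> forall x, x \in fg_X G -> f x = flow_step G f x.
Proof. by split => H x Hx; have := H x Hx; rewrite /flow_step fsumE. Qed.

Lemma flow_step_mono (G : flow_graph M) f g : wf G ->
  (forall x, x \in fg_X G -> le (f x) (g x)) -> forall x, le (flow_step G f x) (flow_step G g x).
Proof.
move=> Hc H x; apply: le_add; first exact: le_refl.
by rewrite !big_seq; apply: le_big => z Hz; apply: cont_mono; [apply: Hc | apply: H].
Qed.

Section Kleene.
Variable G : flow_graph M.
Hypothesis wfG : wf G.

Definition kleene_iter (n : nat) : nat -> M := iter n (flow_step G) (fun _ => zero).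

Lemma kleene_nondecr x : nondecr (fun n => kleene_iter n x).
Proof.
move=> n; elim: n x => [|n IH] x; first exact: le0.
by apply: flow_step_mono => // y _; apply: IH.
Qed.

Definition kleene_flow (x : nat) : M :=
  epsilon (inhabits zero) (seq_lub (fun n => kleene_iter n x)).

Lemma kleene_flow_spec x : seq_lub (fun n => kleene_iter n x) (kleene_flow x).
Proof.
have [l Hl] := seq_lub_ex (kleene_nondecr x).
exact: (epsilon_spec (inhabits zero) _ (ex_intro _ l Hl)).
Qed.

Lemma kleene_flow_fix x : flow_step G kleene_flow x = kleene_flow x.
Proof.
have [_ Hsum] := @big_seq_lub M (enum_fset (fg_X G))
  (fun z n => fg_E G z x (kleene_iter n z)) (fun z => fg_E G z x (kleene_flow z))
  (fun z Hz => conj (fun n => cont_mono (wfG x Hz) (kleene_nondecr z n))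
                    (seq_lub_cont (wfG x Hz) (kleene_nondecr z) (kleene_flow_spec z))).
apply: lub_unique (seq_lub_addl (inflow G x) _ Hsum) _.
  by move=> n; rewrite !big_seq; apply: le_big => z Hz; apply/(cont_mono (wfG x Hz))/kleene_nondecr.
exact: seq_lub_shift (kleene_nondecr x) (kleene_flow_spec x).
Qed.

Lemma kleene_flow_park p : (forall x, x \in fg_X G -> le (flow_step G p x) (p x)) ->
  forall x, x \in fg_X G -> le (kleene_flow x) (p x).
Proof.
move=> Hp x Hx; apply: (seq_lub_least (kleene_flow_spec x)) => n.
elim: n x Hx => [|n IH] y Hy; first exact: le0.
exact: le_trans (flow_step_mono wfG IH y) (Hp y Hy).
Qed.

Lemma flow_least : is_least_flow G (flow G).
Proof.
apply: (epsilon_spec (inhabits (fun _ => zero)) _ (ex_intro _ kleene_flow _)).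
split; first by apply/is_flowE => x _; rewrite kleene_flow_fix.
move=> g /is_flowE Hg; apply: kleene_flow_park => x Hx; rewrite -Hg //; exact: le_refl.
Qed.

Lemma flow_fix x : x \in fg_X G -> flow_step G (flow G) x = flow G x.
Proof. by have [/is_flowE H _] := flow_least => /H ->. Qed.

Lemma flow_park p : (forall x, x \in fg_X G -> le (flow_step G p x) (p x)) ->
  forall x, x \in fg_X G -> le (flow G x) (p x).
Proof.
move=> Hp x Hx; have [_ Hleast] := flow_least.
have Hkleene : is_flow G kleene_flow by apply/is_flowE => y _; rewrite kleene_flow_fix.
exact: le_trans (Hleast _ Hkleene x Hx) (kleene_flow_park Hp Hx).
Qed.

Lemma flow_ge_inflow x : x \in fg_X G -> le (inflow G x) (flow G x).
Proof. by move=> Hx; rewrite -flow_fix //; exact: le_addr. Qed.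

Lemma flow_ge_edge x y : x \in fg_X G -> y \in fg_X G -> le (fg_E G y x (flow G y)) (flow G x).
Proof.
move=> Hx Hy; rewrite -[X in le _ X]flow_fix // /flow_step (bigD1_seq y) ?fset_uniq //.
rewrite maddA [add (inflow _ _) _]maddC -maddA; exact: le_addr.
Qed.

End Kleene.

Lemma flow_step_ext (X : {fset nat}) (E E' : nat -> nat -> M -> M) (i i' : nat -> nat -> M)
    (f f' : nat -> M) x :
  (forall z, z \notin X -> i z x = i' z x) ->
  (forall z, z \in X -> E z x (f z) = E' z x (f' z)) ->
  flow_step (FlowGraph X E i) f x = flow_step (FlowGraph X E' i') f' x.
Proof.
move=> Hi HE; rewrite /flow_step /inflow /=; congr add; first exact: isum_ext.
by apply: eq_big_seq => z Hz; apply: HE.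
Qed.

Lemma flow_ext (G G' : flow_graph M) : fg_X G = fg_X G' -> wf G -> wf G' ->
  (forall f x, x \in fg_X G -> flow_step G f x = flow_step G' f x) ->
  forall x, x \in fg_X G -> flow G x = flow G' x.
Proof.
move=> HX Hc Hc' Hstep x Hx; apply: le_antisym.
  apply: (flow_park Hc) x Hx => y Hy; rewrite Hstep // flow_fix -?HX //; exact: le_refl.
rewrite HX in Hx; apply: (flow_park Hc') x Hx => y Hy.
by rewrite -Hstep ?HX // flow_fix ?HX //; exact: le_refl.
Qed.

Lemma flow_mono_in (X : {fset nat}) (E : nat -> nat -> M -> M) (i i' : nat -> nat -> M) :
  wf (FlowGraph X E i) ->
  (forall z x, z \notin X -> x \in X -> le (i' z x) (i z x)) ->
  forall x, x \in X -> le (flow (FlowGraph X E i') x) (flow (FlowGraph X E i) x).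
Proof.
move=> Hc Hi; have Hc' : wf (FlowGraph X E i') by move=> x y Hx; apply: Hc.
apply: (flow_park Hc') => x Hx; rewrite -[X in le _ X](flow_fix Hc) //.
by apply: le_add; [apply: isum_mono => z Hz; apply: Hi | exact: le_refl].
Qed.

Definition restr_in (X : {fset nat}) (E : nat -> nat -> M -> M) (i : nat -> nat -> M)
    (f : nat -> M) : nat -> nat -> M :=
  fun z y => if z \in X then E z y (f z) else i z y.

(* Well-formedness only depends on the edges leaving the nodes. *)
Lemma wf_sub (X Y : {fset nat}) (E : nat -> nat -> M -> M) (i i' : nat -> nat -> M) :
  Y `<=` X -> wf (FlowGraph X E i) -> wf (FlowGraph Y E i').
Proof. by move=> /fsubsetP HYX Hc x y /= Hx; apply/Hc/HYX. Qed.

Lemma flow_step_restrict (X Y : {fset nat}) (E : nat -> nat -> M -> M) (i : nat -> nat -> M)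
    (f : nat -> M) x : Y `<=` X ->
  flow_step (FlowGraph X E i) f x = flow_step (FlowGraph Y E (restr_in X E i f)) f x.
Proof.
move=> HYX; rewrite /flow_step /inflow /= /restr_in.
rewrite (isum_split (fun z => i z x) (fun z => E z x (f z)) HYX) (fset_big_split _ HYX).
by rewrite -!maddA [add (\big[add/zero]_(z <- enum_fset Y) _) _]maddC.
Qed.

Lemma flow_restrict (X Y : {fset nat}) (E : nat -> nat -> M -> M) (i : nat -> nat -> M) :
  wf (FlowGraph X E i) -> Y `<=` X ->
  forall x, x \in Y ->
  flow (FlowGraph Y E (restr_in X E i (flow (FlowGraph X E i)))) x = flow (FlowGraph X E i) x.
Proof.
move=> Hc HYX; set g := flow (FlowGraph X E i); set H := FlowGraph Y E _.
have wfH : wf H by apply: wf_sub Hc.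
have inX z : z \in Y -> z \in X by apply: (fsubsetP HYX).
have flowH_le : forall x, x \in Y -> le (flow H x) (g x).
  apply: (flow_park wfH) => x Hx.
  by rewrite -[X in le _ X](flow_fix Hc) ?inX // (flow_step_restrict _ _ _ _ HYX); exact: le_refl.
pose p x := if x \in Y then flow H x else g x.
have Hp : forall x, x \in X -> le (flow_step (FlowGraph X E i) p x) (p x).
  move=> x Hx; rewrite /p; case: ifP => HxY.
    rewrite (flow_step_restrict _ _ _ _ HYX) -[X in le _ X](flow_fix wfH) //.
    have -> : flow_step (FlowGraph Y E (restr_in X E i p)) p x = flow_step H (flow H) x.
      apply: flow_step_ext => z Hz; first by rewrite /restr_in /p (negbTE Hz).
      by rewrite /p Hz.
    exact: le_refl.
  rewrite -[X in le _ X](flow_fix Hc) //; apply: flow_step_mono => // z _.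
  by rewrite /p; case: ifP => HzY; [exact: flowH_le | exact: le_refl].
move=> x Hx; apply: le_antisym; first exact: flowH_le.
by have := flow_park Hc Hp (inX x Hx); rewrite /p Hx.
Qed.

(* [Ea] and [Eb] have the same outflow from [Y] at the inflow [j]: this is the
   transfer-function equality tf(Y,Ea)(j) = tf(Y,Eb)(j) at one inflow. *)
Definition same_outflow (Y : {fset nat}) (Ea Eb : nat -> nat -> M -> M)
    (j : nat -> nat -> M) : Prop :=
  forall x y, x \in Y -> y \notin Y ->
    Ea x y (flow (FlowGraph Y Ea j) x) = Eb x y (flow (FlowGraph Y Eb j) x).

Lemma same_outflow_sym Y Ea Eb j : same_outflow Y Ea Eb j -> same_outflow Y Eb Ea j.
Proof. by move=> H x y Hx Hy; rewrite H. Qed.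

Section Replacement.
Variables (X Y : {fset nat}) (Ea Eb : nat -> nat -> M -> M) (i : nat -> nat -> M).
Hypothesis HYX : Y `<=` X.
Hypotheses (wfA : wf (FlowGraph X Ea i)) (wfB : wf (FlowGraph X Eb i)).
Hypothesis Eab : forall z y, z \in X -> z \notin Y -> Ea z y = Eb z y.
Local Notation GA := (FlowGraph X Ea i).
Local Notation GB := (FlowGraph X Eb i).

(* If [Eb] has the same outflow from [Y] as [Ea] at the inflow that [GA] feeds
   into [Y], then gluing the flow of (Y, Eb, ja) to the flow of [GA] outside [Y]
   yields a flow of [GB]; hence the least flow of [GB] is smaller outside [Y]. *)
Lemma flow_le_off : same_outflow Y Ea Eb (restr_in X Ea i (flow GA)) ->
  forall x, x \in X -> x \notin Y -> le (flow GB x) (flow GA x).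
Proof.
move=> Hout; set HB := FlowGraph Y Eb (restr_in X Ea i (flow GA)).
have wfHB : wf HB by apply: wf_sub wfB.
pose p x := if x \in Y then flow HB x else flow GA x.
have step_p x : flow_step GB p x = flow_step HB (flow HB) x.
  rewrite (flow_step_restrict _ _ _ _ HYX); apply: flow_step_ext => z Hz.
    by rewrite /restr_in /p (negbTE Hz); case: ifP => // HzX; rewrite Eab.
  by rewrite /p Hz.
have p_fix x : x \in X -> flow_step GB p x = p x.
  move=> Hx; rewrite step_p /p; case: ifP => HxY; first exact: flow_fix.
  rewrite -(flow_fix wfA Hx) (flow_step_restrict _ _ _ _ HYX).
  apply: flow_step_ext => // z Hz.
  by rewrite -(flow_restrict wfA HYX Hz) Hout ?HxY.
have p_pre y : y \in X -> le (flow_step GB p y) (p y).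
  by move=> Hy; rewrite p_fix //; exact: le_refl.
move=> x Hx HxY; have := flow_park wfB p_pre Hx.
by rewrite /p (negbTE HxY).
Qed.

End Replacement.

(* The same setting, now with the outflow equality at the inflows fed into [Y]
   by either graph: this is what a footprint provides. *)
Section FootprintEquivalence.
Variables (X Y : {fset nat}) (Ea Eb : nat -> nat -> M -> M) (i : nat -> nat -> M).
Hypothesis HYX : Y `<=` X.
Hypotheses (wfA : wf (FlowGraph X Ea i)) (wfB : wf (FlowGraph X Eb i)).
Hypothesis Eab : forall z y, z \in X -> z \notin Y -> Ea z y = Eb z y.
Local Notation GA := (FlowGraph X Ea i).
Local Notation GB := (FlowGraph X Eb i).
Hypothesis HoutA : same_outflow Y Ea Eb (restr_in X Ea i (flow GA)).
Hypothesis HoutB : same_outflow Y Ea Eb (restr_in X Eb i (flow GB)).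

Lemma flow_eq_off x : x \in X -> x \notin Y -> flow GA x = flow GB x.
Proof.
move=> Hx HxY; apply: le_antisym; last exact: (flow_le_off HYX wfA wfB Eab HoutA).
have Eba z y : z \in X -> z \notin Y -> Eb z y = Ea z y by move=> Hz HzY; rewrite Eab.
exact: (flow_le_off HYX wfB wfA Eba (same_outflow_sym HoutB)).
Qed.

(* Hence [GA] and [GB] have the same outflow: inside [Y] both outflows are
   computed by the restrictions to [Y], which now receive the same inflow. *)
Lemma outflow_eq x y : x \in X -> y \notin X -> Ea x y (flow GA x) = Eb x y (flow GB x).
Proof.
move=> Hx Hy; case HxY: (x \in Y); last by rewrite Eab ?HxY // flow_eq_off ?HxY.
have HyY : y \notin Y by apply: contraNN Hy => /(fsubsetP HYX).
rewrite -(flow_restrict wfA HYX HxY) -(flow_restrict wfB HYX HxY) HoutA //.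
congr (Eb x y _); apply: flow_ext => //=; [exact: wf_sub wfB | exact: wf_sub wfB |].
move=> f w _; apply: flow_step_ext => // z HzY; rewrite /restr_in; case: ifP => // HzX.
by rewrite Eab ?flow_eq_off.
Qed.

End FootprintEquivalence.

Lemma restr_in_mono (X : {fset nat}) (E : nat -> nat -> M -> M) (i i' : nat -> nat -> M) :
  wf (FlowGraph X E i) ->
  (forall z y, z \notin X -> y \in X -> le (i' z y) (i z y)) ->
  forall z y, y \in X ->
  le (restr_in X E i' (flow (FlowGraph X E i')) z y) (restr_in X E i (flow (FlowGraph X E i)) z y).
Proof.
move=> Hc Hi z y Hy; rewrite /restr_in; case: ifP => Hz; last by apply: Hi; rewrite ?Hz.
by apply: cont_mono; [exact: Hc | exact: flow_mono_in].
Qed.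

End LeastFlows.

Lemma footprint_full (M : flow_monoid) (h1 h2 : flow_graph M) :
  wf h1 -> wf h2 -> fg_X h1 = fg_X h2 -> in_eq (fg_X h1) (fg_in h1) (fg_in h2) ->
  forall Y, FP h1 h2 Y -> FP h1 h2 (fg_X h1).
Proof.
case: h1 h2 => [X E1 in1] [X2 E2 in2] /= Hw1 Hw2 HX; subst X2 => Hin Y.
move=> [_ [[_ [HinY HtfY]] [_ [HEz _]]]]; move: HinY HtfY HEz => /=.
set Y' := X `&` Y => HinY HtfY HEz.
have HY'X : Y' `<=` X by exact: fsubsetIl.
have wf1 j : wf (FlowGraph X E1 j) by move=> x y Hx; apply: Hw1.
have wf2 j : wf (FlowGraph X E2 j) by move=> x y Hx; apply: Hw2.
split; first exact: fsubset_refl.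
split; last by rewrite /fg_eq /in_eq /= fsetDv fsetI0.
split => //=; split; first by move=> z y; rewrite fsetIid => Hz Hy /=; rewrite (negbTE Hz) Hin.
rewrite /tf_eq_on /tf /outflow /= fsetIid => i Hi x y Hx Hy.
have Hi1 z w : z \notin X -> w \in X -> le (i z w) (in1 z w).
  by move=> Hz Hw; have := Hi z w Hz Hw; rewrite (negbTE Hz).
have Hi2 z w : z \notin X -> w \in X -> le (i z w) (in2 z w).
  by move=> Hz Hw; rewrite -Hin //; exact: Hi1.
have Eab z w : z \in X -> z \notin Y' -> E1 z w = E2 z w.
  by move=> Hz HzY; apply: HEz; rewrite in_fsetI in_fsetD Hz andbT; rewrite in_fsetI Hz in HzY.
have inX w : w \in Y' -> w \in X by apply: (fsubsetP HY'X).
apply: (outflow_eq HY'X (wf1 i) (wf2 i) Eab) => // [u v Hu Hv|u v Hu Hv].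
  apply: HtfY => // z w _ Hw; exact: restr_in_mono (wf1 in1) Hi1 z w (inX w Hw).
apply: HtfY => // z w Hz Hw; rewrite (HinY z w Hz Hw).
exact: restr_in_mono (wf2 in2) Hi2 z w (inX w Hw).
Qed.

(* In a finite commutative monoid whose algebraic preorder is antisymmetric every
   chain has a greatest element; hence chain lubs exist and every monotone map is
   chain-continuous, so such a monoid is a flow monoid. *)
Section FiniteFlowMonoid.
Variables (T : finType) (add : T -> T -> T) (zero : T).
Hypothesis addA : forall a b c, add a (add b c) = add (add a b) c.
Hypothesis addC : forall a b, add a b = add b a.
Hypothesis add0 : forall a, add zero a = a.
Hypothesis antisym : forall a b, mle add a b -> mle add b a -> a = b.

Lemma fin_mle_refl a : mle add a a. Proof. by exists zero; rewrite addC add0. Qed.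

Lemma fin_mle_trans a b c : mle add a b -> mle add b c -> mle add a c.
Proof. by move=> [o ->] [o' ->]; exists (add o o'); rewrite addA. Qed.

Lemma fin_mleP a b : reflect (mle add a b) [exists o, b == add a o].
Proof. by apply: (iffP existsP) => -[o Ho]; exists o; apply/eqP. Qed.

(* The greatest element of a chain is one with the most chain elements below it. *)
Lemma fin_chain_max (K : T -> Prop) : is_chain add K ->
  exists2 m, K m & forall k, K k -> mle add k m.
Proof.
move=> [[k0 Kk0] Htot].
pose inK x : bool := if excluded_middle_informative (K x) then true else false.
have inKP x : reflect (K x) (inK x).
  by rewrite /inK; case: excluded_middle_informative => H; constructor.
pose below y := #|[pred z | inK z && [exists o, y == add z o]]|.
have [m /inKP Km Hmax] := arg_maxnP below (introT (inKP k0) Kk0).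
exists m => // k Kk; case: (boolP [exists o, m == add k o]) => [/fin_mleP //|Hkm].
have Hmk : mle add m k by case: (Htot k m Kk Km) => // /fin_mleP; rewrite (negbTE Hkm).
have : below m < below k.
  apply/proper_card/properP; split.
    apply/subsetP => z; rewrite !inE => /andP [-> /fin_mleP Hzm].
    exact/fin_mleP/(fin_mle_trans Hzm Hmk).
  exists k; rewrite !inE (introT (inKP k) Kk) ?(negbTE Hkm) //=.
  exact/fin_mleP/fin_mle_refl.
by move=> Hlt; have := Hmax k (introT (inKP k) Kk); rewrite /= leqNgt Hlt.
Qed.

Lemma fin_chain_lub (K : T -> Prop) : is_chain add K -> exists l, is_lub add K l.
Proof. by move=> /fin_chain_max [m Km Hm]; exists m; split => // u; apply. Qed.

Lemma fin_mono_continuous (f : T -> T) : (forall a b, mle add a b -> mle add (f a) (f b)) ->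
  forall K l, is_chain add K -> is_lub add K l -> is_lub add (img f K) (f l).
Proof.
move=> Hf K l HK [Hub Hleast]; have [m Km Hm] := fin_chain_max HK.
have -> : l = m by apply: antisym; [apply: Hleast | apply: Hub].
by split => [_ [k [Kk ->]]|u Hu]; [apply/Hf/Hm | apply: Hu; exists m].
Qed.

Lemma fin_add_lub (n : T) (K : T -> Prop) l : is_chain add K -> is_lub add K l ->
  is_lub add (img (add n) K) (add n l).
Proof. by apply: fin_mono_continuous => a b [o ->]; exists o; rewrite addA. Qed.

Definition finite_flow_monoid : flow_monoid :=
  FlowMonoid addA addC add0 antisym fin_chain_lub fin_add_lub.

End FiniteFlowMonoid.

(* The counterexample lives in the flow monoid of subsets of three tokens
   {a, b, c} under union, encoded as boolean triples (a, b, c). *)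
Definition B3 := (bool * bool * bool)%type.
Definition b3add (u v : B3) : B3 := (u.1.1 || v.1.1, u.1.2 || v.1.2, u.2 || v.2).
Definition b3zero : B3 := (false, false, false).
Definition b3le (u v : B3) : bool := [&& u.1.1 ==> v.1.1, u.1.2 ==> v.1.2 & u.2 ==> v.2].

Ltac b3_cases := repeat (let x := fresh "x" in intro x;
  let T := type of x in let T' := eval hnf in T in
  lazymatch T' with prod _ _ => case: x => [[[] []] []] end).

Lemma b3addA u v w : b3add u (b3add v w) = b3add (b3add u v) w.
Proof. by move: u v w; b3_cases. Qed.
Lemma b3addC u v : b3add u v = b3add v u. Proof. by move: u v; b3_cases. Qed.
Lemma b3add0 u : b3add b3zero u = u. Proof. by move: u; b3_cases. Qed.

Lemma mle_b3 u v : mle b3add u v <-> b3le u v.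
Proof.
split; first by move=> [o ->]; move: u o; b3_cases.
by move=> H; exists v; move: u v H; b3_cases.
Qed.

Lemma b3_antisym u v : mle b3add u v -> mle b3add v u -> u = v.
Proof. by move=> /mle_b3 + /mle_b3; move: u v; b3_cases. Qed.

Definition M3 : flow_monoid := finite_flow_monoid b3addA b3addC b3add0 b3_antisym.

Lemma leM3 (u v : M3) : le u v <-> b3le u v. Proof. exact: mle_b3. Qed.

Lemma maddM3 : @madd M3 = b3add. Proof. by []. Qed.

Lemma M3_idem (u : M3) : @madd M3 u u = u. Proof. by case: u => [[[] []] []]. Qed.

Lemma M3_cont (f : M3 -> M3) : (forall u v, b3le u v -> b3le (f u) (f v)) -> chain_continuous f.
Proof.
move=> Hf; have Hmono u v : mle b3add u v -> mle b3add (f u) (f v).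
  by move=> /mle_b3 /Hf /mle_b3.
exact: (fin_mono_continuous b3addA b3addC b3add0 b3_antisym Hmono).
Qed.

Definition tok_a : M3 := (true, false, false).
Definition tok_b : M3 := (false, true, false).
Definition tok_c : M3 := (false, false, true).

Definition gate (u v : M3) : M3 := if v.1.1 then u else b3zero.

Definition watch1 (v : M3) : M3 := if v.1.2 && v.2 then tok_a else b3zero.
Definition watch2 (v : M3) : M3 := if [&& v.1.1, v.1.2 & v.2] then tok_a else b3zero.

Definition side_tok (s : nat) : M3 := if s == 1 then tok_b else tok_c.

Definition core_edge (x y : nat) : M3 -> M3 :=
  if (x == 2) && ((y == 1) || (y == 3)) then gate tok_a
  else if ((x == 1) || (x == 3)) && (y == 2) then gate (side_tok x)
  else fun=> b3zero.

Definition ex_edge (w : M3 -> M3) (x y : nat) : M3 -> M3 :=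
  if (x == 2) && (y == 4) then w else core_edge x y.

Definition ex_in (z y : nat) : M3 := if (z == 0) && (y == 2) then tok_a else b3zero.

Definition ex_nodes : {fset nat} := [fset 1; 2; 3].

Definition ex_graph (w : M3 -> M3) : flow_graph M3 := FlowGraph ex_nodes (ex_edge w) ex_in.

Lemma gate_cont u : chain_continuous (gate u).
Proof. by apply: M3_cont; rewrite /gate; move: u; b3_cases. Qed.

Lemma watch1_cont : chain_continuous watch1.
Proof. by apply: M3_cont; rewrite /watch1; b3_cases. Qed.

Lemma watch2_cont : chain_continuous watch2.
Proof. by apply: M3_cont; rewrite /watch2; b3_cases. Qed.

Lemma core_cont Y j : wf (FlowGraph Y core_edge j).
Proof.
move=> x y _; rewrite /= /core_edge; case: ifP => _; first exact: gate_cont.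
by case: ifP => _; [exact: gate_cont | apply: M3_cont].
Qed.

Lemma ex_cont w Y j : chain_continuous w -> wf (FlowGraph Y (ex_edge w) j).
Proof.
move=> Hw x y Hx; rewrite /= /ex_edge; case: ifP => _; first exact: Hw.
exact: (@core_cont Y j x y Hx).
Qed.

Lemma ex_nodes_not4 (Y : {fset nat}) x : Y `<=` ex_nodes -> x \in Y -> x != 4.
Proof. by move=> /fsubsetP HY /HY; apply: contraTneq => ->; rewrite !inE. Qed.

Lemma flow_ex_edge w Y j : chain_continuous w -> Y `<=` ex_nodes -> forall x, x \in Y ->
  flow (FlowGraph Y (ex_edge w) j) x = flow (FlowGraph Y core_edge j) x.
Proof.
move=> Hw HY; apply: (@flow_ext M3 (FlowGraph Y (ex_edge w) j) (FlowGraph Y core_edge j)) => //.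
- exact: ex_cont.
- exact: core_cont.
move=> f x Hx.
by apply: flow_step_ext => // z _; rewrite /ex_edge (negbTE (ex_nodes_not4 HY Hx)) andbF.
Qed.

Lemma ex_restr_in_eq Y :
  in_eq (ex_nodes `&` Y)
    (fg_in (restrict (ex_graph watch1) Y)) (fg_in (restrict (ex_graph watch2) Y)).
Proof.
move=> z y _ Hy; have HyX : y \in ex_nodes by move: Hy; rewrite in_fsetI => /andP [].
rewrite /= /ex_edge (negbTE (ex_nodes_not4 (fsubset_refl _) HyX)) andbF; case: ifP => // Hz.
by rewrite /ex_graph !flow_ex_edge //; [exact: watch2_cont | exact: watch1_cont].
Qed.

Definition watch_agree (Y : {fset nat}) : Prop :=
  forall j, (forall z y, z \notin Y -> y \in Y ->
               le (j z y) (fg_in (restrict (ex_graph watch1) Y) z y)) ->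
    watch1 (flow (FlowGraph Y core_edge j) 2) = watch2 (flow (FlowGraph Y core_edge j) 2).

Lemma ex_FP Y : Y `<=` ex_nodes -> 2 \in Y ->
  FP (ex_graph watch1) (ex_graph watch2) Y <-> watch_agree Y.
Proof.
move=> HY H2; have HXY : ex_nodes `&` Y = Y by apply/fsetIidPr.
have outflowE w j x y : chain_continuous w -> x \in Y ->
    tf (restrict (ex_graph w) Y) j x y = ex_edge w x y (flow (FlowGraph Y core_edge j) x).
  by move=> Hw Hx; rewrite /tf /outflow /= HXY flow_ex_edge.
have H4 : 4 \notin Y by apply/negP => /(ex_nodes_not4 HY); rewrite eqxx.
split.
  move=> [_ [[_ [_ Htf]] _]] j Hj; move: Htf; rewrite /tf_eq_on /= HXY.
  move=> /(_ j Hj 2 4 H2 H4); rewrite !outflowE //; [exact: watch2_cont | exact: watch1_cont].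
move=> Hagree; split => //; split.
  split => //; split; first exact: ex_restr_in_eq.
  rewrite /tf_eq_on /= HXY => j Hj x y Hx Hy.
  rewrite !outflowE //; [|exact: watch2_cont | exact: watch1_cont].
  by rewrite /ex_edge; case: ifP => // /andP [/eqP -> _]; exact: Hagree.
split => //; split; last exact: ex_restr_in_eq.
move=> x y; rewrite /= in_fsetI in_fsetD => /andP [_ /andP [HxY _]]; rewrite /ex_edge.
by have /negbTE -> : x != 2 by apply: contraNneq HxY => ->.
Qed.

Definition side_set (s : nat) : {fset nat} := [fset s; 2].

(* What [h1] can send into [side_set s] from outside: nothing into [s], and at
   most a and the token of the other side into 2. *)
Definition side_bound (s y : nat) : M3 :=
  if y == 2 then b3add tok_a (side_tok (4 - s)) else b3zero.

Lemma side_inflow_bound s z y : s = 1 \/ s = 3 -> z \notin side_set s -> y \in side_set s ->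
  le (fg_in (restrict (ex_graph watch1) (side_set s)) z y) (side_bound s y).
Proof.
move=> Hs; rewrite /side_set !inE negb_or => /andP [Hzs Hz2] Hy; apply/leM3.
have Hy4 : y != 4 by case: Hs Hy => -> /orP [] /eqP ->.
rewrite /= /ex_edge (negbTE Hy4) andbF /core_edge /ex_in (negbTE Hz2) /=.
move: (flow _ z) => v; case: ifP => HzX.
  have Hz : z = 4 - s.
    move: HzX; rewrite /ex_nodes !inE (negbTE Hz2) /=.
    by case: Hs Hzs => -> /negbTE ->; rewrite ?orbF => /eqP.
  by subst z; case: Hs Hy => -> /orP [] /eqP -> /=; move: v; b3_cases.
by case: Hs Hy => -> /orP [] /eqP -> /=; case: (z == 0).
Qed.


(* On [side_set s], the token of side [s] can only reach node 2 after a did, so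
   whenever node 2 holds both b and c it also holds a: the watchers agree. *)
Lemma side_watch_agree s : s = 1 \/ s = 3 -> watch_agree (side_set s).
Proof.
move=> Hs j Hj; set G := FlowGraph (side_set s) core_edge j.
have wfG : wf G by exact: core_cont.
have mem_s : s \in side_set s by rewrite !inE eqxx.
have mem_2 : 2 \in side_set s by rewrite !inE eqxx orbT.
have Hin y : y \in side_set s -> le (inflow G y) (side_bound s y).
  move=> Hy; apply: isum_le_idem M3_idem _ => z Hz.
  exact: le_trans (Hj z y Hz Hy) (side_inflow_bound Hs Hz Hy).
have stepE f x : flow_step G f x =
    b3add (inflow G x) (b3add (core_edge s x (f s)) (b3add (core_edge 2 x (f 2)) b3zero)).
  rewrite /flow_step (@big_fset_seq _ _ [:: s; 2]) ?big_cons ?big_nil //.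
    by rewrite /= andbT; case: Hs => ->.
  by move=> z; rewrite !inE.
pose p x := if x == 2 then b3add (inflow G 2) (gate (side_tok s) (inflow G 2))
            else gate tok_a (inflow G 2).
have p_pre x : x \in side_set s -> le (flow_step G p x) (p x).
  move=> Hx; rewrite stepE /p; have := Hin s mem_s; have := Hin 2 mem_2.
  move: Hx; rewrite /side_set !inE => /orP [] /eqP ->;
    move: (inflow G s) (inflow G 2) => u w /leM3 Hw /leM3 Hu; apply/leM3;
    move: Hw Hu; case: Hs => -> /=; rewrite /side_bound /core_edge /=;
    by move: u w; b3_cases.
have := flow_park wfG p_pre mem_2; have := flow_ge_inflow wfG mem_2; have := Hin 2 mem_2.
rewrite /p eqxx; move: (flow G 2) (inflow G 2) => f w /leM3 Hw /leM3 Hwf /leM3 Hf.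
move: Hw Hwf Hf; case: Hs => -> /=; rewrite /side_bound /watch1 /watch2 /=;
  by move: f w; b3_cases.
Qed.

(* In h1, node 2 receives a from node 0 and forwards it to both side nodes. *)
Lemma ex_flow_has_a s : s = 1 \/ s = 3 -> le tok_a (flow (ex_graph watch1) s).
Proof.
move=> Hs; set h := ex_graph watch1.
have wfh : wf h by apply: ex_cont watch1_cont.
have mem2 : 2 \in fg_X h by rewrite !inE.
have memS : s \in fg_X h by case: Hs => ->; rewrite !inE.
have Ha2 : le tok_a (flow h 2).
  apply: le_trans (flow_ge_inflow wfh mem2).
  have H0 : 0 \notin ex_nodes by rewrite !inE.
  exact: (@isum_ge M3 (fun z => z \notin ex_nodes) (fun z => ex_in z 2) 0 H0).
apply: le_trans (flow_ge_edge wfh memS mem2).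
move: Ha2; rewrite /= /ex_edge /core_edge; move: (flow h 2) => v /leM3 Ha; apply/leM3.
by move: Ha; case: Hs => -> /=; move: v; b3_cases.
Qed.

(* The inflow into node 2 that the side nodes send once they have seen a. *)
Definition probe (z y : nat) : M3 :=
  if (y == 2) && ((z == 1) || (z == 3)) then side_tok z else b3zero.

(* On the intersection {2}, the probe b + c is admissible, but the watchers
   then disagree: watch1 emits a while watch2 does not. *)
Lemma inter_not_agree : ~ watch_agree (side_set 1 `&` side_set 3).
Proof.
set Y := side_set 1 `&` side_set 3.
have memY z : (z \in Y) = (z == 2) by rewrite !inE; case: z => [|[|[|[|z]]]].
set G := FlowGraph Y core_edge probe.
have wfG : wf G by exact: core_cont.
have mem2 : 2 \in Y by rewrite memY.
have Hprobe z y : z \notin Y -> y \in Y ->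
    le (probe z y) (fg_in (restrict (ex_graph watch1) Y) z y).
  rewrite !memY => Hz /eqP ->; rewrite /probe eqxx /=.
  case: (boolP ((z == 1) || (z == 3))) => Hz13; last exact: le0.
  have Hs : z = 1 \/ z = 3 by case/orP: Hz13 => /eqP ->; [left | right].
  have HzX : z \in ex_nodes by case: Hs => ->; rewrite !inE.
  rewrite HzX /ex_edge /core_edge (negbTE Hz) Hz13 /=.
  move: (ex_flow_has_a Hs); move: (flow _ z) => v /leM3 Ha; apply/leM3.
  by move: Ha; case: Hs => -> /=; move: v; b3_cases.
have Hin : inflow G 2 = (false, true, true).
  apply: le_antisym.
    apply: isum_le_idem M3_idem _ => z _; apply/leM3; rewrite /= /probe /side_tok.
    by case: (z == 1); case: (z == 3).
  have n1 : 1 \notin Y by rewrite memY.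
  have n3 : 3 \notin Y by rewrite memY.
  have Hb : le (probe 1 2) (inflow G 2) := @isum_ge M3 _ (fun z => probe z 2) 1 n1.
  have Hc : le (probe 3 2) (inflow G 2) := @isum_ge M3 _ (fun z => probe z 2) 3 n3.
  move: Hb Hc; rewrite /probe /side_tok /=; move: (inflow G 2) => v /leM3 Hb /leM3 Hc.
  by apply/leM3; move: v Hb Hc; b3_cases.
have Hflow : flow G 2 = (false, true, true).
  apply: le_antisym; last by rewrite -Hin; exact: flow_ge_inflow.
  apply: (flow_park wfG (p := fun=> (false, true, true))) => // x; rewrite memY => /eqP ->.
  rewrite /flow_step (@big_fset_seq _ _ [:: 2]) => [|//|z]; last by rewrite memY !inE.
  by rewrite big_cons big_nil Hin maddM3; apply/leM3.
by move=> /(_ probe Hprobe); rewrite Hflow.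
Qed.

Lemma side_set_sub s : s = 1 \/ s = 3 -> side_set s `<=` ex_nodes.
Proof. by case=> ->; apply/fsubsetP => z; rewrite !inE => /orP [] /eqP ->. Qed.

Lemma side_footprint s : s = 1 \/ s = 3 ->
  FP (ex_graph watch1) (ex_graph watch2) (side_set s).
Proof.
move=> Hs; apply/ex_FP; [exact: side_set_sub | by rewrite !inE eqxx orbT |].
exact: side_watch_agree.
Qed.

Lemma inter_not_footprint :
  ~ FP (ex_graph watch1) (ex_graph watch2) (side_set 1 `&` side_set 3).
Proof.
rewrite ex_FP; first exact: inter_not_agree.
  exact: fsubset_trans (fsubsetIl _ _) (side_set_sub (or_introl erefl)).
by rewrite !inE.
Qed.

Theorem proposition1 :
  (forall (M : flow_monoid) (h1 h2 : flow_graph M),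
      wf h1 -> wf h2 ->
      fg_X h1 = fg_X h2 -> in_eq (fg_X h1) (fg_in h1) (fg_in h2) ->
      ((exists Y, FP h1 h2 Y) <-> FP h1 h2 (fg_X h1)))
  /\
  (exists (M : flow_monoid) (h1 h2 : flow_graph M),
      wf h1 /\ wf h2 /\
      fg_X h1 = fg_X h2 /\ in_eq (fg_X h1) (fg_in h1) (fg_in h2) /\
      exists Y1 Y2 : {fset nat},
        FP h1 h2 Y1 /\ FP h1 h2 Y2 /\ ~ FP h1 h2 (Y1 `&` Y2)).
Proof.
split.
  move=> M h1 h2 Hw1 Hw2 HX Hin; split; last by exists (fg_X h1).
  by move=> [Y HY]; exact: footprint_full HY.
exists M3, (ex_graph watch1), (ex_graph watch2).
split; first exact: ex_cont watch1_cont.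
split; first exact: ex_cont watch2_cont.
split=> //; split=> //.
exists (side_set 1), (side_set 3).
split; first by apply: side_footprint; left.
split; first by apply: side_footprint; right.
exact: inter_not_footprint.
Qed.
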